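(* A flag $Z=(g,V)$ is a sudoku flag and subsquares of $R(M_Z)$ are latin squares if and only if $Z$ can be written $$ Z=\left[ \begin{array}{ccc} 1 & 0 & 0 \\ 0 & 1 & 1 \\ a & b & 0 \\ c & d & \beta \end{array} \right], $$ where $b$ and $\beta$ are nonzero and $\Gamma =\begin{pmatrix} a & b\\c &d \end{pmatrix}$ is nonsingular.
   Context: Let $\mathbb F$ be the finite field of order $q$. Locations of a sudoku solution of order $q^2$ are identified with $\mathbb F^4$: location $x_1x_2x_3x_4$ lies in large row $x_1$, row $x_2$ within that large row, large column $x_3$, column $x_4$ within that large column. A two-dimensional subspace $g\subset\mathbb F^4$ generates a (parallel-type) linear sudoku solution, in which the set of locations of each symbol is a coset of $g$, precisely when $g$ meets each of $\langle 1000,0100\rangle$, $\langle 0010,0001\rangle$, $\langle 0100,0001\rangle$ trivially. A flag is a pair $Z=(g,V)$ of subspaces of $\mathbb F^4$ with $\dim g=2$, $\dim V=3$, $g\subset V$; it is a sudoku flag if $g$ generates a linear sudoku solution. A sudoku flag generates a linear sudoku solution $M_Z$ with symbols $\{0,\dots,q^2-1\}$ (written in base $q$ as radix digit and units digit) such that each coset of $g$ houses exactly one symbol and each coset of $V$ houses exactly one radix digit. $R(M_Z)$, the radix solution, is the square of radix digits of the symbols of $M_Z$. The notation $[v_1\ v_2\ v_3]$ denotes the flag $(\langle v_1,v_2\rangle,\langle v_1,v_2,v_3\rangle)$, with the $v_i$ written as columns. *)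

From mathcomp Require Import all_boot all_order all_algebra all_field.
Set Implicit Arguments. Unset Strict Implicit. Unset Printing Implicit Defensive.
Import GRing.Theory.
Local Open Scope ring_scope.

Section Sudoku.
Variable F : finFieldType.

(* Locations are row vectors x = (x1 x2 x3 x4) in F^4; subspaces of F^4 are
   represented as row spaces of matrices (mxalgebra). *)
Definition vec4 (x1 x2 x3 x4 : F) : 'rV[F]_4 := \row_(k < 4) [:: x1; x2; x3; x4]`_k.

Definition e1 : 'rV[F]_4 := vec4 1 0 0 0.
Definition e2 : 'rV[F]_4 := vec4 0 1 0 0.
Definition e3 : 'rV[F]_4 := vec4 0 0 1 0.
Definition e4 : 'rV[F]_4 := vec4 0 0 0 1.

Definition meets_trivially m n (g : 'M[F]_(m, 4)) (W : 'M[F]_(n, 4)) : Prop :=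
  forall v : 'rV[F]_4, (v <= g)%MS -> (v <= W)%MS -> v = 0.

Definition sudoku_gen m (g : 'M[F]_(m, 4)) : Prop :=
  [/\ \rank g = 2%N,
      meets_trivially g (col_mx e1 e2),
      meets_trivially g (col_mx e3 e4) &
      meets_trivially g (col_mx e2 e4)].

Definition is_flag m n (g : 'M[F]_(m, 4)) (V : 'M[F]_(n, 4)) : Prop :=
  [/\ \rank g = 2%N, \rank V = 3%N & (g <= V)%MS].

Definition sudoku_flag m n (g : 'M[F]_(m, 4)) (V : 'M[F]_(n, 4)) : Prop :=
  is_flag g V /\ sudoku_gen g.

(* M : locations -> symbols {0, ..., q^2-1} is a linear sudoku
   solution generated by the flag (g, V): locations carry the same symbol iff
   they lie in the same coset of g, and the same radix digit (symbol div q)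
   iff they lie in the same coset of V. *)
Definition generated_by m n (g : 'M[F]_(m, 4)) (V : 'M[F]_(n, 4))
    (M : 'rV[F]_4 -> 'I_(#|F| ^ 2)) : Prop :=
  forall x y : 'rV[F]_4,
    (M x == M y) = (x - y <= g)%MS /\
    (M x %/ #|F| == M y %/ #|F|)%N = (x - y <= V)%MS.

Definition radix_sol (M : 'rV[F]_4 -> 'I_(#|F| ^ 2)) (x : 'rV[F]_4) : nat :=
  (M x %/ #|F|)%N.

Definition latin_square (L : F -> F -> nat) : Prop :=
  [/\ forall i j, (L i j < #|F|)%N,
      forall i, injective (L i) &
      forall j, injective (fun i => L i j)].

(* the subsquare in large row s and large column t, with rows x2 and
   columns x4 *)
Definition subsquare (R : 'rV[F]_4 -> nat) (s t : F) : F -> F -> nat :=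
  fun i j => R (vec4 s i t j).

Definition subsquares_latin (R : 'rV[F]_4 -> nat) : Prop :=
  forall s t : F, latin_square (subsquare R s t).

End Sudoku.

(* The radix digit of M_Z is constant exactly on the cosets of V, and two cells
   of a row (resp. column) of a subsquare differ by a multiple of e4 (resp. e2);
   so the subsquares of R(M_Z) are latin iff e2 and e4 lie outside V.
   Now g meets <e3, e4> trivially, so g is the graph of a linear map on the
   first two coordinates, spanned by (1,0,a,c) and (0,1,b,d); meeting <e2, e4>
   trivially forces b <> 0 and meeting <e1, e2> trivially forces Gamma to be
   nonsingular.  As e2 is not in V, V + <e2> is everything, so V contains some
   e4 - t e2, with t <> 0 because e4 is not in V: this is (0,1,0,beta) up to
   scaling. *)

From mathcomp Require Import all_boot all_order all_algebra all_field.
From mathcomp Require Import ring.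
Import GRing.Theory.
Local Open Scope ring_scope.
Set Implicit Arguments. Unset Strict Implicit. Unset Printing Implicit Defensive.

Section RowSpaces.
Variable F : fieldType.

Lemma sub_adds_rVP m n (A : 'M[F]_(m, n)) (u v : 'rV[F]_n) :
  (u <= A + v)%MS <-> exists t, (u - t *: v <= A)%MS.
Proof.
split => [/sub_addsmxP [[p k]] /= -> | [t uA]].
  by exists (k 0 0); rewrite {1}[k]mx11_scalar mul_scalar_mx addrK submxMl.
by rewrite -(subrK (t *: v) u) addmx_sub_adds // scalemx_sub.
Qed.

Lemma sub_col_mx2P n (u r1 r2 : 'rV[F]_n) :
  (u <= col_mx r1 r2)%MS <-> exists x y, u = x *: r1 + y *: r2.
Proof.
rewrite -addsmxE; split => [/sub_adds_rVP [y /sub_rVP [x Hx]] | [x [y ->]]].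
  by exists x, y; rewrite -Hx subrK.
by apply/sub_adds_rVP; exists y; rewrite addrK scalemx_sub.
Qed.

Lemma submxB m1 m2 n (A B : 'M[F]_(m1, n)) (C : 'M[F]_(m2, n)) :
  (A <= C)%MS -> (B <= C)%MS -> (A - B <= C)%MS.
Proof. by move=> AC BC; rewrite addmx_sub // eqmx_opp. Qed.

Lemma submx_congr_mod m n (A : 'M[F]_(m, n)) (u v : 'rV[F]_n) :
  (u - v <= A)%MS -> (u <= A)%MS = (v <= A)%MS.
Proof.
move=> uvA; apply/idP/idP => [uA | vA]; last by rewrite -(subrK v u) addmx_sub.
by rewrite -[v](subKr u) submxB.
Qed.

Lemma mxrank_adds_notin m n (A : 'M[F]_(m, n)) (v : 'rV[F]_n) :
  ~~ (v <= A)%MS -> \rank (A + v)%MS = (\rank A).+1.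
Proof.
move=> vA; apply/eqP; rewrite eqn_leq; apply/andP; split.
  have [+ _] := mxrank_adds_leqif A v.
  by move/leq_trans; apply; rewrite rank_rV -[(\rank A).+1]addn1 leq_add2l leq_b1.
apply: rank_ltmx; rewrite ltmxE addsmxSl /=.
by apply: contra vA; apply: submx_trans (addsmxSr A v).
Qed.

Lemma sub_scale_notin m n (A : 'M[F]_(m, n)) (v : 'rV[F]_n) t :
  ~~ (v <= A)%MS -> (t *: v <= A)%MS = (t == 0).
Proof.
move=> vA; have [-> | t0] := eqVneq t 0; first by rewrite scale0r sub0mx.
by rewrite (eqmx_scale _ t0) (negbTE vA).
Qed.

End RowSpaces.

(* Given w in V but not in g and z outside V, with g + w + z full, every x is
   u + s w + t z with u in g: the pair (s, t) labels the coset x + g and t alone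
   the coset x + V. *)
Section CosetCoordinates.
Variables (F : fieldType) (m1 m2 n : nat).
Variables (g : 'M[F]_(m1, n)) (V : 'M[F]_(m2, n)) (w z : 'rV[F]_n).
Hypothesis gwz_full : row_full (g + w + z)%MS.

Lemma coset_coords_exist x :
  exists st : F * F, ((x - (st.1 *: w + st.2 *: z))%R <= g)%MS.
Proof.
have /sub_adds_rVP [t /sub_adds_rVP [s xst]] : (x <= g + w + z)%MS by apply: submx_full.
by exists (s, t); rewrite opprD addrA addrAC.
Qed.

Definition coset_coords x : F * F := xchoose (coset_coords_exist x).

Let c := coset_coords.

Lemma coset_coords_sub x y :
  ((x - y - (((c x).1 - (c y).1) *: w + ((c x).2 - (c y).2) *: z))%R <= g)%MS.
Proof.
have := submxB (xchooseP (coset_coords_exist x)) (xchooseP (coset_coords_exist y)).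
by congr (_ <= _)%MS; apply/rowP => k; rewrite !mxE /=; ring.
Qed.

Hypotheses (gV : (g <= V)%MS) (wV : (w <= V)%MS).
Hypotheses (wg : ~~ (w <= g)%MS) (zV : ~~ (z <= V)%MS).

Lemma coset_coords_uniq s t : ((s *: w + t *: z)%R <= g)%MS -> s = 0 /\ t = 0.
Proof.
move=> stg; have t0 : t = 0.
  apply/eqP; rewrite -(sub_scale_notin t zV) -[t *: z](addKr (s *: w)) addrC.
  exact: submxB (submx_trans stg gV) (scalemx_sub s wV).
by move: stg; rewrite t0 scale0r addr0 sub_scale_notin // => /eqP.
Qed.

Lemma subg_coset_coords x y :
  (x - y <= g)%MS = ((c x).1 == (c y).1) && ((c x).2 == (c y).2).
Proof.
rewrite (submx_congr_mod (coset_coords_sub x y)).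
apply/idP/andP => [/coset_coords_uniq [/eqP + /eqP] | [/eqP-> /eqP->]].
  by rewrite !subr_eq0 => -> ->.
by rewrite !subrr !scale0r addr0 sub0mx.
Qed.

Lemma subV_coset_coords x y : (x - y <= V)%MS = ((c x).2 == (c y).2).
Proof.
rewrite (submx_congr_mod (submx_trans (coset_coords_sub x y) gV)).
rewrite (@submx_congr_mod _ _ _ V _ (((c x).2 - (c y).2) *: z)).
  by rewrite sub_scale_notin // subr_eq0.
by rewrite addrK scalemx_sub.
Qed.

End CosetCoordinates.

Section RadixCode.
Variable T : finType.

Lemma radix_code_bound (t s : T) : (enum_rank t * #|T| + enum_rank s < #|T| ^ 2)%N.
Proof.
rewrite -mulnn (leq_trans (_ : _ < enum_rank t * #|T| + #|T|)%N) ?ltn_add2l //.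
by rewrite -mulSnr leq_mul2r ltn_ord orbT.
Qed.

Definition radix_code (t s : T) : 'I_(#|T| ^ 2) := Ordinal (radix_code_bound t s).

Lemma radix_code_div t s : (radix_code t s %/ #|T|)%N = enum_rank t.
Proof.
have T_gt0 : (0 < #|T|)%N by apply/card_gt0P; exists t.
by rewrite /= divnMDl // divn_small ?addn0.
Qed.

Lemma radix_code_eq t s t' s' :
  (radix_code t s == radix_code t' s') = (t == t') && (s == s').
Proof.
apply/eqP/andP => [eq_code | [/eqP-> /eqP->] //].
have eq_t : t = t'.
  apply/enum_rank_inj/val_inj => /=.
  by rewrite -(radix_code_div t s) -(radix_code_div t' s') eq_code.
move/(congr1 val): eq_code; rewrite /= eq_t => /addnI /val_inj /enum_rank_inj ->.
by rewrite !eqxx.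
Qed.

End RadixCode.

Section Vec4.
Variable F : finFieldType.
Implicit Types x y : F.

Lemma vec4D x1 x2 x3 x4 y1 y2 y3 y4 :
  vec4 x1 x2 x3 x4 + vec4 y1 y2 y3 y4 = vec4 (x1 + y1) (x2 + y2) (x3 + y3) (x4 + y4).
Proof. by apply/rowP => k; rewrite !mxE; case: k => [[|[|[|[|k]]]] Hk]. Qed.

Lemma vec4Z t x1 x2 x3 x4 :
  t *: vec4 x1 x2 x3 x4 = vec4 (t * x1) (t * x2) (t * x3) (t * x4).
Proof. by apply/rowP => k; rewrite !mxE; case: k => [[|[|[|[|k]]]] Hk]. Qed.

Lemma vec4B x1 x2 x3 x4 y1 y2 y3 y4 :
  vec4 x1 x2 x3 x4 - vec4 y1 y2 y3 y4 = vec4 (x1 - y1) (x2 - y2) (x3 - y3) (x4 - y4).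
Proof. by apply/rowP => k; rewrite !mxE; case: k => [[|[|[|[|k]]]] Hk]. Qed.

Lemma vec40 : vec4 0 0 0 0 = 0 :> 'rV[F]_4.
Proof. by apply/rowP => k; rewrite !mxE; case: k => [[|[|[|[|k]]]] Hk]. Qed.

Lemma vec4_inj x1 x2 x3 x4 y1 y2 y3 y4 :
  vec4 x1 x2 x3 x4 = vec4 y1 y2 y3 y4 -> [/\ x1 = y1, x2 = y2, x3 = y3 & x4 = y4].
Proof.
move=> eq_v; have coord k := congr1 (fun v : 'rV[F]_4 => v ord0 k) eq_v.
have := coord (inord 0); have := coord (inord 1); have := coord (inord 2).
by have := coord (inord 3); rewrite !mxE !inordK.
Qed.

Lemma vec4_eq0 x1 x2 x3 x4 :
  (vec4 x1 x2 x3 x4 == 0) = [&& x1 == 0, x2 == 0, x3 == 0 & x4 == 0].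
Proof.
rewrite -vec40; apply/eqP/and4P => [/vec4_inj [-> -> -> ->] //|].
by case=> /eqP-> /eqP-> /eqP-> /eqP->.
Qed.

End Vec4.

Lemma generated_by_exists (F : finFieldType) (g V : 'M[F]_4) :
  is_flag g V -> exists M, generated_by g V M.
Proof.
case=> rg rV gV.
have /row_subPn [i wg] : ~~ (V <= g)%MS by apply/negP => /mxrankS; rewrite rg rV.
have /row_subPn [j zV] : ~~ (1%:M <= V)%MS.
  by apply/negP => /mxrankS; rewrite mxrank1 rV.
set w := row i V in wg; set z := row j 1%:M in zV.
have wV : (w <= V)%MS by apply: row_sub.
have zgw : ~~ (z <= g + w)%MS.
  by apply: contra zV => /submx_trans; apply; rewrite addsmx_sub gV.
have gwz_full : row_full (g + w + z)%MS.
  by rewrite /row_full !mxrank_adds_notin // rg.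
pose c := coset_coords gwz_full.
exists (fun x => radix_code (c x).2 (c x).1) => x y; split.
  by rewrite radix_code_eq (subg_coset_coords gwz_full gV wV wg zV) andbC.
rewrite !radix_code_div (inj_eq val_inj) (inj_eq enum_rank_inj).
by rewrite (subV_coset_coords gwz_full gV wV zV).
Qed.

Section RadixSolution.
Variables (F : finFieldType) (g V : 'M[F]_4) (M : 'rV[F]_4 -> 'I_(#|F| ^ 2)).
Hypothesis genM : generated_by g V M.

Lemma radix_sol_eq x y : (radix_sol M x == radix_sol M y) = (x - y <= V)%MS.
Proof. by have [_ ->] := genM x y. Qed.

Lemma subsquare_row_eq s t i j j' :
  (subsquare (radix_sol M) s t i j == subsquare (radix_sol M) s t i j')
    = ((j - j') *: e4 F <= V)%MS.
Proof. by rewrite radix_sol_eq vec4B !subrr /e4 vec4Z !mulr0 mulr1. Qed.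

Lemma subsquare_col_eq s t i i' j :
  (subsquare (radix_sol M) s t i j == subsquare (radix_sol M) s t i' j)
    = ((i - i') *: e2 F <= V)%MS.
Proof. by rewrite radix_sol_eq vec4B !subrr /e2 vec4Z !mulr0 mulr1. Qed.

Lemma subsquares_latinP :
  subsquares_latin (radix_sol M) <-> ~~ (e2 F <= V)%MS /\ ~~ (e4 F <= V)%MS.
Proof.
split=> [latin | [e2V e4V] s t]; last split=> [i j | i j j' | j i i'].
- have [_ row_inj col_inj] := latin 0 0.
  split; apply/negP => eV.
    have : subsquare (radix_sol M) 0 0 0 0 == subsquare (radix_sol M) 0 0 1 0.
      by rewrite subsquare_col_eq scalemx_sub.
    by move/eqP/(col_inj 0)/eqP; rewrite eq_sym oner_eq0.
  have : subsquare (radix_sol M) 0 0 0 0 == subsquare (radix_sol M) 0 0 0 1.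
    by rewrite subsquare_row_eq scalemx_sub.
  by move/eqP/(row_inj 0)/eqP; rewrite eq_sym oner_eq0.
- have q_gt0 : (0 < #|F|)%N by apply/card_gt0P; exists 0.
  by rewrite ltn_divLR // mulnn ltn_ord.
- by move/eqP; rewrite subsquare_row_eq sub_scale_notin // subr_eq0 => /eqP.
- by move/eqP; rewrite subsquare_col_eq sub_scale_notin // subr_eq0 => /eqP.
Qed.

End RadixSolution.

Section NormalForm.
Variable F : finFieldType.
Implicit Types (a b c d beta x y : F) (g V : 'M[F]_4).

Definition flag_g a b c d : 'M[F]_(1 + 1, 4) := col_mx (vec4 1 0 a c) (vec4 0 1 b d).

Definition flag_V a b c d beta : 'M[F]_(1 + 1 + 1, 4) :=
  col_mx (flag_g a b c d) (vec4 0 1 0 beta).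

Lemma unitmx_Gamma a b c d :
  (col_mx (\row_(j < 2) [:: a; b]`_j) (\row_(j < 2) [:: c; d]`_j) \in unitmx)
    = (a * d - b * c != 0).
Proof.
(* Entries of col_mx at concrete indices do not compute, as split goes through ltnP. *)
have -> : col_mx (\row_(j < 2) [:: a; b]`_j) (\row_(j < 2) [:: c; d]`_j)
    = \matrix_(i < 2, j < 2) [:: [:: a; b]`_j; [:: c; d]`_j]`_i.
  by apply/matrixP => i j; rewrite !mxE; case: splitP => k; rewrite ord1 !mxE => ->.
rewrite unitmxE unitfE (expand_det_row _ ord0) !big_ord_recl big_ord0.
rewrite /cofactor !det_mx11 !mxE /= expr0 expr1.
by congr (_ != 0); ring.
Qed.

Lemma sub_flag_g_coords a b c d u : (u <= flag_g a b c d)%MS ->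
  exists x y, u = vec4 x y (x * a + y * b) (x * c + y * d).
Proof.
by case/sub_col_mx2P => x [y ->]; exists x, y; rewrite !vec4Z vec4D; congr vec4; ring.
Qed.

Lemma sub_flag_V_coords a b c d beta u : (u <= flag_V a b c d beta)%MS ->
  exists x y z, u = vec4 x (y + z) (x * a + y * b) (x * c + y * d + z * beta).
Proof.
rewrite /flag_V -addsmxE => /sub_adds_rVP [z /sub_flag_g_coords [x [y xy]]].
exists x, y, z; rewrite -(subrK (z *: vec4 0 1 0 beta) u) xy vec4Z vec4D.
by congr vec4; ring.
Qed.

Lemma rank_flag_g a b c d : \rank (flag_g a b c d) = 2.
Proof.
rewrite /flag_g -addsmxE mxrank_adds_notin ?rank_rV ?vec4_eq0 ?oner_eq0 //.
apply/negP => /sub_rVP [t]; rewrite vec4Z mulr0 => /vec4_inj [_ /eqP].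
by rewrite oner_eq0.
Qed.

Lemma rank_flag_V a b c d beta : b != 0 -> \rank (flag_V a b c d beta) = 3.
Proof.
move=> b0; rewrite /flag_V -addsmxE mxrank_adds_notin ?rank_flag_g //.
apply/negP => /sub_flag_g_coords [x [y /vec4_inj [<- <- b_0 _]]].
by move: b0; rewrite b_0 mul0r add0r mul1r eqxx.
Qed.

Lemma sudoku_gen_flag_g a b c d :
  b != 0 -> a * d - b * c != 0 -> sudoku_gen (flag_g a b c d).
Proof.
move=> b0 det0; split; first exact: rank_flag_g.
- move=> v /sub_flag_g_coords [x [y ->]] /sub_col_mx2P [x' [y']].
  rewrite /e1 /e2 !vec4Z vec4D !mulr0 !mulr1 !addr0 => /vec4_inj [_ _ ea ec].
  have x0 : x = 0.
    apply: (mulIf det0); rewrite /= mul0r.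
    transitivity (d * (x * a + y * b) - b * (x * c + y * d)); first ring.
    by rewrite ea ec; ring.
  have y0 : y = 0.
    apply: (mulIf det0); rewrite /= mul0r.
    transitivity (a * (x * c + y * d) - c * (x * a + y * b)); first ring.
    by rewrite ea ec; ring.
  by rewrite x0 y0 !mul0r !addr0 vec40.
- move=> v /sub_flag_g_coords [x [y ->]] /sub_col_mx2P [x' [y']].
  rewrite /e3 /e4 !vec4Z vec4D !mulr0 !addr0 => /vec4_inj [-> -> _ _].
  by rewrite !mul0r !addr0 vec40.
- move=> v /sub_flag_g_coords [x [y ->]] /sub_col_mx2P [x' [y']].
  rewrite /e2 /e4 !vec4Z vec4D !mulr0 !addr0 => /vec4_inj [x0 _ eb _].
  have y0 : y = 0 by apply: (mulIf b0); rewrite /= mul0r -eb x0 mul0r add0r.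
  by rewrite x0 y0 !mul0r !addr0 vec40.
Qed.

Lemma e2_notin_flag_V a b c d beta :
  b != 0 -> beta != 0 -> ~~ (e2 F <= flag_V a b c d beta)%MS.
Proof.
move=> b0 beta0; apply/negP.
move=> /sub_flag_V_coords [x [y [z /vec4_inj [x0 yz eb ebeta]]]].
have y0 : y = 0 by apply: (mulIf b0); rewrite /= mul0r eb -x0; ring.
have z0 : z = 0 by apply: (mulIf beta0); rewrite /= mul0r ebeta -x0 y0; ring.
by move: yz; rewrite y0 z0 addr0 => /eqP; rewrite oner_eq0.
Qed.

Lemma e4_notin_flag_V a b c d beta :
  b != 0 -> ~~ (e4 F <= flag_V a b c d beta)%MS.
Proof.
move=> b0; apply/negP.
move=> /sub_flag_V_coords [x [y [z /vec4_inj [x0 yz eb ebeta]]]].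
have y0 : y = 0 by apply: (mulIf b0); rewrite /= mul0r eb -x0; ring.
have z0 : z = 0 by rewrite -[z]add0r -{1}y0 -yz.
by move: ebeta; rewrite -x0 y0 z0 !mul0r !addr0 => /eqP; rewrite oner_eq0.
Qed.

Lemma e34_complement_graph g :
  \rank g = 2 -> meets_trivially g (col_mx (e3 F) (e4 F)) ->
  forall x1 x2, exists x3 x4, (vec4 x1 x2 x3 x4 <= g)%MS.
Proof.
move=> rg g34 x1 x2.
have e3g : ~~ (e3 F <= g)%MS.
  apply/negP => /g34 e3_0.
  have /eqP : e3 F = 0.
    by apply: e3_0; apply/sub_col_mx2P; exists 1, 0; rewrite scale1r scale0r addr0.
  by rewrite vec4_eq0 oner_eq0 !andbF.
have e4g3 : ~~ (e4 F <= g + e3 F)%MS.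
  apply/negP => /sub_adds_rVP [t /g34 e4t_0].
  have /eqP : e4 F - t *: e3 F = 0.
    by apply: e4t_0; apply/sub_col_mx2P; exists (- t), 1; rewrite scale1r scaleNr addrC.
  by rewrite /e3 /e4 vec4Z vec4B !mulr0 !subr0 vec4_eq0 oner_eq0 !andbF.
have /sub_adds_rVP [t /sub_adds_rVP [s gst]] : (vec4 x1 x2 0 0 <= g + e3 F + e4 F)%MS.
  by apply: submx_full; rewrite /row_full !mxrank_adds_notin // rg.
exists (- s), (- t); move: gst.
by rewrite /e3 /e4 !vec4Z !vec4B !mulr0 !mulr1 !subr0 !sub0r.
Qed.

Lemma sudoku_gen_normal_form g : sudoku_gen g ->
  exists a b c d, [/\ b != 0, a * d - b * c != 0 & (g == flag_g a b c d)%MS].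
Proof.
case=> rg g12 g34 g24.
have [a [c r1g]] := e34_complement_graph rg g34 1 0.
have [b [d r2g]] := e34_complement_graph rg g34 0 1.
have b0 : b != 0.
  apply/eqP => b_0; move: r2g; rewrite b_0 => /g24 r2_0.
  have /eqP : vec4 0 1 0 d = 0.
    apply: r2_0; apply/sub_col_mx2P; exists 1, d.
    by rewrite /e2 /e4 !vec4Z vec4D; congr vec4; ring.
  by rewrite vec4_eq0 oner_eq0 andbF.
have det0 : a * d - b * c != 0.
  apply/eqP => det_0.
  have /g12 comb_0 : ((b *: vec4 1 0 a c - a *: vec4 0 1 b d)%R <= g)%MS.
    by rewrite submxB ?scalemx_sub.
  have /eqP : (b *: vec4 1 0 a c - a *: vec4 0 1 b d)%R = 0.
    apply: comb_0; apply/sub_col_mx2P; exists b, (- a).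
    rewrite /e1 /e2 !vec4Z vec4D vec4B; congr vec4; try ring.
    by rewrite !mulr0 addr0 -oppr0 -det_0 opprB.
  by rewrite !vec4Z vec4B vec4_eq0 mulr1 mulr0 subr0 (negbTE b0).
exists a, b, c, d; split=> //.
have gsub : (flag_g a b c d <= g)%MS by rewrite col_mx_sub r1g r2g.
by rewrite andbC -(mxrank_leqif_eq gsub) rank_flag_g rg.
Qed.

Lemma third_flag_row V :
  \rank V = 3 -> ~~ (e2 F <= V)%MS -> ~~ (e4 F <= V)%MS ->
  exists2 beta, beta != 0 & (vec4 0 1 0 beta <= V)%MS.
Proof.
move=> rV e2V e4V.
have /sub_adds_rVP [t e4tV] : (e4 F <= V + e2 F)%MS.
  by apply: submx_full; rewrite /row_full mxrank_adds_notin ?rV.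
have t0 : t != 0 by apply: contraNneq e4V => t_0; rewrite t_0 scale0r subr0 in e4tV.
exists (- t^-1); first by rewrite oppr_eq0 invr_eq0.
have -> : vec4 0 1 0 (- t^-1) = - t^-1 *: (e4 F - t *: e2 F).
  by rewrite /e2 /e4 !vec4Z vec4B vec4Z; congr vec4; field.
exact: scalemx_sub.
Qed.

Lemma sudoku_flag_normal_form g V :
  sudoku_flag g V -> ~~ (e2 F <= V)%MS -> ~~ (e4 F <= V)%MS ->
  exists a b c d beta, [/\ b != 0, beta != 0, a * d - b * c != 0,
    (g == flag_g a b c d)%MS & (V == flag_V a b c d beta)%MS].
Proof.
case=> [[rg rV gV] gen_g] e2V e4V.
have [a [b [c [d [b0 det0 eq_g]]]]] := sudoku_gen_normal_form gen_g.
have [beta beta0 r3V] := third_flag_row rV e2V e4V.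
exists a, b, c, d, beta; split=> //.
have Vsub : (flag_V a b c d beta <= V)%MS.
  by rewrite col_mx_sub r3V andbT (submx_trans _ gV) //; case/andP: eq_g.
by rewrite andbC -(mxrank_leqif_eq Vsub) rank_flag_V ?rV.
Qed.

Lemma normal_form_sudoku_flag g V a b c d beta :
  b != 0 -> beta != 0 -> a * d - b * c != 0 ->
  (g :=: flag_g a b c d)%MS -> (V :=: flag_V a b c d beta)%MS ->
  [/\ sudoku_flag g V, ~~ (e2 F <= V)%MS & ~~ (e4 F <= V)%MS].
Proof.
move=> b0 beta0 det0 eq_g eq_V.
have [rk_g g12 g34 g24] := sudoku_gen_flag_g b0 det0.
split; [split; split | by rewrite eq_V e2_notin_flag_V | by rewrite eq_V e4_notin_flag_V].
- by rewrite eq_g.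
- by rewrite eq_V rank_flag_V.
- rewrite eq_g eq_V.
  by apply: submx_trans (addsmxSl _ (vec4 0 1 0 beta)) _; rewrite addsmxE.
- by rewrite eq_g.
- by move=> v; rewrite eq_g; apply: g12.
- by move=> v; rewrite eq_g; apply: g34.
- by move=> v; rewrite eq_g; apply: g24.
Qed.

End NormalForm.

Theorem proposition4p5 (F : finFieldType) (g V : 'M[F]_4) :
  (sudoku_flag g V /\
   forall M : 'rV[F]_4 -> 'I_(#|F| ^ 2),
     generated_by g V M -> subsquares_latin (radix_sol M))
  <->
  (exists a b c d beta : F,
     [/\ b != 0, beta != 0,
         col_mx (\row_(j < 2) [:: a; b]`_j) (\row_(j < 2) [:: c; d]`_j)
           \in unitmx,
         (g == col_mx (vec4 1 0 a c) (vec4 0 1 b d))%MS &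
         (V == col_mx (col_mx (vec4 1 0 a c) (vec4 0 1 b d)) (vec4 0 1 0 beta))%MS]).
Proof.
have latin_iff : sudoku_flag g V ->
    (forall M, generated_by g V M -> subsquares_latin (radix_sol M)) <->
    ~~ (e2 F <= V)%MS /\ ~~ (e4 F <= V)%MS.
  case=> flagZ _; have [M genM] := generated_by_exists flagZ.
  split=> [/(_ M genM) /(subsquares_latinP genM) // | e24V M' genM'].
  exact/(subsquares_latinP genM').
split=> [[Z /(latin_iff Z) [e2V e4V]] | [a [b [c [d [beta [b0 beta0]]]]]]].
  have [a [b [c [d [beta [b0 beta0 det0 eq_g eq_V]]]]]] :=
    sudoku_flag_normal_form Z e2V e4V.
  by exists a, b, c, d, beta; rewrite unitmx_Gamma.
rewrite unitmx_Gamma => -[det0 /eqmxP eq_g /eqmxP eq_V].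
have [Z e2V e4V] := normal_form_sudoku_flag b0 beta0 det0 eq_g eq_V.
by split=> //; apply/(latin_iff Z).
Qed.
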